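(* Let $\mathcal{H}$ be a complex Hilbert space and $T\in\mathbb{B}(\mathcal{H})$. Then $$w(T) \leq \frac{\sqrt{2}}{2}\Omega(T) \leq \frac{\sqrt{2}}{2}\min\left\{\sqrt{\|TT^* + T^*T\|},\ \sqrt{\|T\|^2 + w(T^2)}\right\}.$$
   Context: $\mathbb{B}(\mathcal{H})$ is the algebra of bounded linear operators on $\mathcal{H}$, $\|\cdot\|$ the usual operator norm, and $w(T)=\sup\{|\langle Tx,x\rangle|:\|x\|=1\}$ the numerical radius. Dragomir's norm is $\Omega(T)=\sup\{\|\zeta T+\eta T^*\|:\ \zeta,\eta\in\mathbb{C},\ |\zeta|^2+|\eta|^2\le 1\}$. *)

From HB Require Import structures.
From mathcomp Require Import all_boot all_order all_algebra.
From mathcomp Require Import complex.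
From mathcomp Require Import boolp classical_sets reals.
Set Implicit Arguments. Unset Strict Implicit. Unset Printing Implicit Defensive.
Import Order.TTheory GRing.Theory Num.Theory.
Local Open Scope ring_scope.
Local Open Scope classical_set_scope.

Section Hilbert.
Variable R : realType.
Variable V : lmodType R[i].
Variable ip : V -> V -> R[i].

Definition hnorm (x : V) : R := Num.sqrt (@complex.Re R (ip x x)).

Record is_hilbert : Prop := IsHilbert {
  ip_linl : forall (a : R[i]) (x y z : V), ip (a *: x + y) z = a * ip x z + ip y z;
  ip_conj : forall x y : V, ip y x = conjc (ip x y);
  ip_ge0 : forall x : V, 0 <= ip x x;
  ip_eq0 : forall x : V, ip x x = 0 -> x = 0;
  ip_complete : forall u : nat -> V,
     (forall e : R, 0 < e -> exists N, forall m n, (N <= m)%N -> (N <= n)%N ->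
        hnorm (u m - u n) < e) ->
     exists l : V, forall e : R, 0 < e -> exists N, forall n, (N <= n)%N ->
        hnorm (u n - l) < e }.

Definition is_bounded_op (T : V -> V) : Prop :=
  (forall (a : R[i]) (x y : V), T (a *: x + y) = a *: T x + T y) /\
  (exists M : R, forall x, hnorm (T x) <= M * hnorm x).

Definition is_adjoint (T Ts : V -> V) : Prop :=
  forall x y : V, ip (T x) y = ip x (Ts y).

Definition opnorm (T : V -> V) : R :=
  sup [set hnorm (T x) | x in [set x | hnorm x <= 1]].

Definition numrad (T : V -> V) : R :=
  sup [set Normc.normc (ip (T x) x) | x in [set x | hnorm x = 1]].

(* Dragomir's norm Omega(T) = sup { ||zeta T + eta T^*|| : |zeta|^2+|eta|^2 <= 1 } *)
Definition dragomir (T Ts : V -> V) : R :=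
  sup [set opnorm (fun x => ze.1 *: T x + ze.2 *: Ts x) |
        ze in [set ze : R[i] * R[i] | Normc.normc ze.1 ^+ 2 + Normc.normc ze.2 ^+ 2 <= 1]].
End Hilbert.

From HB Require Import structures.
From mathcomp Require Import all_boot all_order all_algebra.
From mathcomp Require Import complex.
From mathcomp Require Import boolp classical_sets reals.
From mathcomp Require Import ring lra.
Import Order.TTheory GRing.Theory Num.Theory.

Set Implicit Arguments. Unset Strict Implicit. Unset Printing Implicit Defensive.
Local Open Scope ring_scope.
Local Open Scope classical_set_scope.
Local Open Scope complex_scope.

(* For a unit vector [x] put [u = <Tx, x>].  The coefficients [a = k u^*] and
   [b = k u] with [k = 1 / (sqrt 2 |u|)] satisfy [|a|^2 + |b|^2 = 1] and
   [<(aT + bT^* ) x, x> = sqrt 2 |u|], whence [sqrt 2 w(T) <= Omega(T)].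
   Conversely, for [|a|^2 + |b|^2 <= 1] and [||x|| <= 1],
     [||aTx + bT^* x||^2 <= |a|^2 ||Tx||^2 + |b|^2 ||T^* x||^2 + 2 |a| |b| |<Tx, T^* x>|].
   Bounding the cross term by Cauchy-Schwarz gives at most
   [||Tx||^2 + ||T^* x||^2 = Re <(TT^* + T^* T) x, x> <= ||TT^* + T^* T||];
   rewriting it as [<T^2 x, x>] gives at most [||T||^2 + w(T^2)]. *)

Section ComplexModulus.
Variable R : rcfType.
Implicit Types z : R[i].
Local Notation nc := (@Normc.normc R).

Lemma normc_ge0 z : 0 <= nc z.
Proof. by case: z => a b; rewrite sqrtr_ge0. Qed.

Lemma normc_real (k : R) : nc k%:C = `|k|.
Proof. by rewrite /= expr0n addr0 sqrtr_sqr. Qed.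

Lemma normc_conj z : nc (conjc z) = nc z.
Proof. by case: z => a b /=; rewrite sqrrN. Qed.

Lemma Re_le_normc z : complex.Re z <= nc z.
Proof.
case: z => a b /=; rewrite (le_trans (ler_norm a)) // -sqrtr_sqr.
by rewrite ler_wsqrtr // lerDl sqr_ge0.
Qed.

Lemma mulcJ_normc z : z * conjc z = (nc z ^+ 2)%:C.
Proof.
case: z => a b /=; rewrite sqr_sqrtr ?addr_ge0 ?sqr_ge0 //.
by apply/eqP; rewrite eq_complex /=; apply/andP; split; apply/eqP; ring.
Qed.

End ComplexModulus.

Section InnerProduct.
Variables (R : realType) (V : lmodType R[i]) (ip : V -> V -> R[i]).
Hypothesis hilbertV : is_hilbert ip.
Local Notation hn := (hnorm ip).
Local Notation nc := (@Normc.normc R).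

Lemma ipDl x y z : ip (x + y) z = ip x z + ip y z.
Proof. by rewrite -[x]scale1r (ip_linl hilbertV) mul1r scale1r. Qed.

Lemma ip0l z : ip 0 z = 0.
Proof. by apply/(addrI (ip 0 z)); rewrite -ipDl !addr0. Qed.

Lemma ipZl a x z : ip (a *: x) z = a * ip x z.
Proof. by rewrite -[a *: x]addr0 (ip_linl hilbertV) ip0l addr0. Qed.

Lemma ipDr x y z : ip z (x + y) = ip z x + ip z y.
Proof. by rewrite (ip_conj hilbertV) ipDl rmorphD /= -!(ip_conj hilbertV). Qed.

Lemma ipZr a x z : ip z (a *: x) = conjc a * ip z x.
Proof. by rewrite (ip_conj hilbertV) ipZl rmorphM /= -!(ip_conj hilbertV). Qed.

Lemma ip0r z : ip z 0 = 0.
Proof. by rewrite (ip_conj hilbertV) ip0l conjc0. Qed.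

Lemma hnorm_ge0 x : 0 <= hn x.
Proof. exact: sqrtr_ge0. Qed.

Lemma ipxxE x : ip x x = (hn x ^+ 2)%:C.
Proof.
have := ip_ge0 hilbertV x; rewrite lecE /hnorm.
by case: (ip x x) => a b /= /andP[/eqP -> a_ge0]; rewrite sqr_sqrtr.
Qed.

Lemma hnorm_eq0 x : hn x = 0 -> x = 0.
Proof. by move=> x0; apply: (ip_eq0 hilbertV); rewrite ipxxE x0 expr0n. Qed.

Lemma hnorm0 : hn 0 = 0.
Proof. by rewrite /hnorm ip0l sqrtr0. Qed.

Lemma hnorm_combE a b u v :
  hn (a *: u + b *: v) ^+ 2 =
  nc a ^+ 2 * hn u ^+ 2 + nc b ^+ 2 * hn v ^+ 2
  + 2 * complex.Re (a * conjc b * ip u v).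
Proof.
have -> : hn (a *: u + b *: v) ^+ 2 = complex.Re (ip (a *: u + b *: v) (a *: u + b *: v)).
  by rewrite ipxxE.
rewrite !ipDl !ipDr !ipZl !ipZr !ipxxE [ip v u](ip_conj hilbertV).
move: (ip u v) (hn u) (hn v) => w p q.
case: a b w => [a1 a2] [b1 b2] [w1 w2] /=.
by rewrite !sqr_sqrtr ?addr_ge0 ?sqr_ge0 //; ring.
Qed.

Lemma hnormZ c x : hn (c *: x) = nc c * hn x.
Proof.
have := hnorm_combE c 0 x x.
rewrite scale0r addr0 Normc.normc0 conjc0 !(mulr0, mul0r, expr0n, addr0) /= => cxE.
rewrite -[LHS]ger0_norm ?hnorm_ge0 // -sqrtr_sqr cxE -exprMn sqrtr_sqr.
by rewrite ger0_norm // mulr_ge0 ?normc_ge0 ?hnorm_ge0.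
Qed.

(* Expand [||p^2 u - <u,x> x||^2 >= 0] with [p = ||x||]. *)
Lemma cauchy_schwarz u x : nc (ip u x) <= hn u * hn x.
Proof.
have [x0|xn0] := eqVneq (hn x) 0.
  by rewrite (hnorm_eq0 x0) ip0r Normc.normc0 hnorm0 mulr0.
have p_gt0 : 0 < hn x by rewrite lt_def xn0 hnorm_ge0.
set p := hn x in p_gt0 xn0 *; set b := ip u x.
have := sqr_ge0 (hn ((p ^+ 2)%:C *: u + - b *: x)).
rewrite hnorm_combE normc_real ger0_norm ?sqr_ge0 // complex.normcN -/p.
have -> : complex.Re ((p ^+ 2)%:C * conjc (- b) * b) = - (p ^+ 2 * nc b ^+ 2).
  by case: b => b1 b2 /=; rewrite sqr_sqrtr ?addr_ge0 ?sqr_ge0 //; ring.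
move=> expansion_ge0.
have nb0 := normc_ge0 b; have nu0 := hnorm_ge0 u.
have p_ge0 := ltW p_gt0.
rewrite -(@ler_pXn2r _ 2) ?nnegrE ?mulr_ge0 //.
by rewrite -(@ler_pM2r _ (p ^+ 2)) ?exprn_gt0 //; nra.
Qed.

Lemma hnorm_comb_le a b u v :
  hn (a *: u + b *: v) ^+ 2 <=
  nc a ^+ 2 * hn u ^+ 2 + nc b ^+ 2 * hn v ^+ 2 + 2 * (nc a * nc b * nc (ip u v)).
Proof.
rewrite hnorm_combE lerD2l ler_pM2l // (le_trans (Re_le_normc _)) //.
by rewrite !Normc.normcM normc_conj.
Qed.

Lemma ler_hnormD u v : hn (u + v) <= hn u + hn v.
Proof.
have := hnorm_comb_le 1 1 u v.
rewrite !scale1r Normc.normc1 expr1n !mul1r => uv_le.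
have cs := cauchy_schwarz u v.
have u0 := hnorm_ge0 u; have v0 := hnorm_ge0 v; have uv0 := hnorm_ge0 (u + v).
by rewrite -(@ler_pXn2r _ 2) ?nnegrE ?addr_ge0 //; nra.
Qed.

Lemma hnorm_normalize x : hn x != 0 -> hn ((hn x)^-1%:C *: x) = 1.
Proof.
move=> xn0; rewrite hnormZ normc_real ger0_norm ?invr_ge0 ?hnorm_ge0 //.
by rewrite mulVf.
Qed.

Lemma hnorm_le_sqrt x c : hn x ^+ 2 <= c -> hn x <= Num.sqrt c.
Proof. by move=> xc; rewrite -[hn x]ger0_norm ?hnorm_ge0 // -sqrtr_sqr ler_wsqrtr. Qed.

End InnerProduct.

Section Supremum.
Variable R : realType.
Implicit Types (E : set R) (c : R).

Lemma ge0_ge_sup E c : 0 <= c -> ubound E c -> sup E <= c.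
Proof.
move=> c_ge0 Ec; have [[y Ey]|E0] := pselect (E !=set0).
  by apply: ge_sup => //; exists y.
have -> : E = set0 by apply/seteqP; split=> // y Ey; apply: E0; exists y.
by rewrite sup0.
Qed.

Lemma sup_ge0 E : (forall y, E y -> 0 <= y) -> 0 <= sup E.
Proof.
move=> E_ge0; have [[[y Ey] E_ub]|/sup_out->//] := pselect (has_sup E).
exact: le_trans (E_ge0 y Ey) (ub_le_sup E_ub Ey).
Qed.

End Supremum.

Section OperatorNorms.
Variables (R : realType) (V : lmodType R[i]) (ip : V -> V -> R[i]).
Hypothesis hilbertV : is_hilbert ip.
Variable S : V -> V.
Local Notation hn := (hnorm ip).
Local Notation nc := (@Normc.normc R).

Lemma opnorm_ge0 : 0 <= opnorm ip S.
Proof. by apply: sup_ge0 => _ [x _ <-]; apply: hnorm_ge0. Qed.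

Lemma numrad_ge0 : 0 <= numrad ip S.
Proof. by apply: sup_ge0 => _ [x _ <-]; apply: normc_ge0. Qed.

Lemma opnorm_le c :
  0 <= c -> (forall x, hn x <= 1 -> hn (S x) <= c) -> opnorm ip S <= c.
Proof. by move=> c_ge0 Sc; apply: ge0_ge_sup => // _ [x /Sc Sxc <-]. Qed.

Lemma numrad_le c :
  0 <= c -> (forall x, hn x = 1 -> nc (ip (S x) x) <= c) -> numrad ip S <= c.
Proof. by move=> c_ge0 Sc; apply: ge0_ge_sup => // _ [x /Sc Sxc <-]. Qed.

Variable M : R.
Hypothesis S_ball : forall x, hn x <= 1 -> hn (S x) <= M.

Lemma hnorm_le_opnorm x : hn x <= 1 -> hn (S x) <= opnorm ip S.
Proof.
move=> x1; apply: ub_le_sup; last by exists x.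
by exists M => _ [y /S_ball Sy <-].
Qed.

Lemma normc_ip_le_numrad x : hn x = 1 -> nc (ip (S x) x) <= numrad ip S.
Proof.
move=> x1; apply: ub_le_sup; last by exists x.
exists M => _ [y y1 <-].
by rewrite (le_trans (cauchy_schwarz hilbertV _ _)) // y1 mulr1 S_ball ?y1.
Qed.

Hypothesis S_scalable : forall c x, S (c *: x) = c *: S x.

Lemma hnorm_le_opnormM x : hn (S x) <= opnorm ip S * hn x.
Proof.
have [x0|xn0] := eqVneq (hn x) 0.
  have S0 : S 0 = 0 by move: (S_scalable 0 0); rewrite !scale0r.
  by rewrite (hnorm_eq0 hilbertV x0) S0 (hnorm0 hilbertV) mulr0.
have x_gt0 : 0 < hn x by rewrite lt_def xn0 hnorm_ge0.
have x1 : hn ((hn x)^-1%:C *: x) <= 1 by rewrite hnorm_normalize.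
have := hnorm_le_opnorm x1.
rewrite S_scalable (hnormZ hilbertV) normc_real ger0_norm ?invr_ge0 ?hnorm_ge0 //.
by rewrite mulrC ler_pdivrMr.
Qed.

Lemma normc_ip_le_numradM x : nc (ip (S x) x) <= numrad ip S * hn x ^+ 2.
Proof.
have [x0|xn0] := eqVneq (hn x) 0.
  rewrite (hnorm_eq0 hilbertV x0) (ip0r hilbertV) Normc.normc0.
  by rewrite mulr_ge0 ?numrad_ge0 ?sqr_ge0.
have x_gt0 : 0 < hn x by rewrite lt_def xn0 hnorm_ge0.
have := normc_ip_le_numrad (hnorm_normalize hilbertV xn0).
rewrite S_scalable (ipZl hilbertV) (ipZr hilbertV) !Normc.normcM normc_conj.
rewrite normc_real ger0_norm ?invr_ge0 ?hnorm_ge0 // mulrA -expr2 mulrC exprVn.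
by rewrite ler_pdivrMr ?exprn_gt0.
Qed.

End OperatorNorms.


Section AdjointPair.
Variables (R : realType) (V : lmodType R[i]) (ip : V -> V -> R[i]).
Hypothesis hilbertV : is_hilbert ip.
Variables T Ts : V -> V.
Hypothesis T_bounded : is_bounded_op ip T.
Hypothesis T_adjoint : is_adjoint ip T Ts.
Local Notation hn := (hnorm ip).
Local Notation nc := (@Normc.normc R).
Local Notation t := (opnorm ip T).
Local Notation TTs_TsT := (fun x => T (Ts x) + Ts (T x)).
Local Notation w2 := (numrad ip (fun x => T (T x))).
Local Notation Om := (dragomir ip T Ts).

Lemma op_scalable c x : T (c *: x) = c *: T x.
Proof.
have T0 : T 0 = 0.
  by apply/(addrI (T 0)); rewrite addr0 -{1}(scale1r (T 0)) -T_bounded.1 scale1r addr0.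
by rewrite -[c *: x]addr0 T_bounded.1 T0 addr0.
Qed.

Lemma op_ball_bounded : exists M, forall x, hn x <= 1 -> hn (T x) <= M.
Proof.
have [M TM] := T_bounded.2; exists (Num.max M 0) => x x1.
have M_le : M <= Num.max M 0 by rewrite le_max lexx.
have M_ge0 : 0 <= Num.max M 0 by rewrite le_max lexx orbT.
apply: le_trans (TM x) _; rewrite -[leRHS]mulr1.
exact: le_trans (ler_wpM2r (hnorm_ge0 _ _) M_le) (ler_wpM2l M_ge0 x1).
Qed.

Lemma hnorm_op_le x : hn (T x) <= t * hn x.
Proof. by have [M TM] := op_ball_bounded; apply: hnorm_le_opnormM TM op_scalable x. Qed.

Lemma hnorm_adj_le y : hn (Ts y) <= t * hn y.
Proof.
have Ts_sqr_le : hn (Ts y) ^+ 2 <= t * hn (Ts y) * hn y.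
  have -> : hn (Ts y) ^+ 2 = complex.Re (ip (T (Ts y)) y).
    by rewrite T_adjoint (ipxxE hilbertV).
  rewrite (le_trans (Re_le_normc _)) // (le_trans (cauchy_schwarz hilbertV _ _)) //.
  by rewrite ler_wpM2r ?hnorm_ge0 ?hnorm_op_le.
have [->|Tsy_neq0] := eqVneq (hn (Ts y)) 0; first by rewrite mulr_ge0 ?opnorm_ge0 ?hnorm_ge0.
rewrite -(@ler_pM2r _ (hn (Ts y))); last by rewrite lt_def Tsy_neq0 hnorm_ge0.
by move: Ts_sqr_le; rewrite expr2 mulrAC.
Qed.

Lemma hnorm_op_ball x : hn x <= 1 -> hn (T x) <= t.
Proof.
move=> x1; rewrite (le_trans (hnorm_op_le x)) // -[leRHS]mulr1.
by rewrite ler_wpM2l ?opnorm_ge0.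
Qed.

Lemma hnorm_adj_ball x : hn x <= 1 -> hn (Ts x) <= t.
Proof.
move=> x1; rewrite (le_trans (hnorm_adj_le x)) // -[leRHS]mulr1.
by rewrite ler_wpM2l ?opnorm_ge0.
Qed.

Lemma sum_sqr_le_opnorm_TTs_TsT x :
  hn x <= 1 -> hn (T x) ^+ 2 + hn (Ts x) ^+ 2 <= opnorm ip TTs_TsT.
Proof.
move=> x1.
have TTs_TsT_ball z : hn z <= 1 -> hn (TTs_TsT z) <= t * t + t * t.
  move=> z1; rewrite (le_trans (ler_hnormD hilbertV _ _)) // lerD //.
    by rewrite (le_trans (hnorm_op_le _)) // ler_wpM2l ?opnorm_ge0 ?hnorm_adj_ball.
  by rewrite (le_trans (hnorm_adj_le _)) // ler_wpM2l ?opnorm_ge0 ?hnorm_op_ball.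
have -> : hn (T x) ^+ 2 + hn (Ts x) ^+ 2 = complex.Re (ip (TTs_TsT x) x).
  rewrite (ipDl hilbertV) [ip (T (Ts x)) x]T_adjoint.
  rewrite [ip (Ts (T x)) x](ip_conj hilbertV) -[ip x (Ts (T x))]T_adjoint.
  by rewrite !(ipxxE hilbertV) /= addrC.
rewrite (le_trans (Re_le_normc _)) // (le_trans (cauchy_schwarz hilbertV _ _)) //.
rewrite (le_trans _ (hnorm_le_opnorm TTs_TsT_ball x1)) //.
by rewrite -[leRHS]mulr1 ler_wpM2l ?hnorm_ge0.
Qed.

Lemma ip_op_adj_le_numrad x : hn x <= 1 -> nc (ip (T x) (Ts x)) <= w2.
Proof.
move=> x1; rewrite -T_adjoint.
have TT_ball z : hn z <= 1 -> hn (T (T z)) <= t * t.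
  by move=> z1; rewrite (le_trans (hnorm_op_le _)) // ler_wpM2l ?opnorm_ge0 ?hnorm_op_ball.
have TT_scalable c z : T (T (c *: z)) = c *: T (T z) by rewrite !op_scalable.
rewrite (le_trans (normc_ip_le_numradM hilbertV TT_ball TT_scalable x)) // -[leRHS]mulr1.
by rewrite ler_wpM2l ?numrad_ge0 // expr_le1 ?hnorm_ge0.
Qed.

Lemma comb_sqr_le_opnorm_TTs_TsT a b x : nc a ^+ 2 + nc b ^+ 2 <= 1 -> hn x <= 1 ->
  hn (a *: T x + b *: Ts x) ^+ 2 <= opnorm ip TTs_TsT.
Proof.
move=> ab1 x1.
apply: le_trans (hnorm_comb_le hilbertV _ _ _ _) _.
apply: le_trans (sum_sqr_le_opnorm_TTs_TsT x1).
have cs := cauchy_schwarz hilbertV (T x) (Ts x).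
have a0 := normc_ge0 a; have b0 := normc_ge0 b.
have P0 := hnorm_ge0 ip (T x); have Q0 := hnorm_ge0 ip (Ts x).
have ab_cs : nc a * nc b * nc (ip (T x) (Ts x)) <= nc a * nc b * (hn (T x) * hn (Ts x)).
  by rewrite ler_wpM2l ?mulr_ge0.
have am_gm := sqr_ge0 (nc a * hn (Ts x) - nc b * hn (T x)).
have abPQ : (nc a ^+ 2 + nc b ^+ 2) * (hn (T x) ^+ 2 + hn (Ts x) ^+ 2) <=
            hn (T x) ^+ 2 + hn (Ts x) ^+ 2.
  by rewrite -[leRHS]mul1r ler_wpM2r ?addr_ge0 ?sqr_ge0.
nra.
Qed.

Lemma comb_sqr_le_opnorm_add_numrad a b x : nc a ^+ 2 + nc b ^+ 2 <= 1 -> hn x <= 1 ->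
  hn (a *: T x + b *: Ts x) ^+ 2 <= t ^+ 2 + w2.
Proof.
move=> ab1 x1.
apply: le_trans (hnorm_comb_le hilbertV _ _ _ _) _.
have a0 := normc_ge0 a; have b0 := normc_ge0 b.
have P0 := hnorm_ge0 ip (T x); have Q0 := hnorm_ge0 ip (Ts x).
have t0 := opnorm_ge0 ip T; have w0 := numrad_ge0 ip (fun x => T (T x)).
have Pt := hnorm_op_ball x1; have Qt := hnorm_adj_ball x1.
have w_le := ip_op_adj_le_numrad x1.
have aP : nc a ^+ 2 * hn (T x) ^+ 2 <= nc a ^+ 2 * t ^+ 2.
  by rewrite ler_wpM2l ?sqr_ge0 // ler_pXn2r ?nnegrE.
have bQ : nc b ^+ 2 * hn (Ts x) ^+ 2 <= nc b ^+ 2 * t ^+ 2.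
  by rewrite ler_wpM2l ?sqr_ge0 // ler_pXn2r ?nnegrE.
have abw : nc a * nc b * nc (ip (T x) (Ts x)) <= nc a * nc b * w2.
  by rewrite ler_wpM2l ?mulr_ge0.
have ab_le : 2 * (nc a * nc b) <= 1.
  have : 0 <= (nc a - nc b) ^+ 2 := sqr_ge0 _.
  nra.
have abw2 : 2 * (nc a * nc b) * w2 <= w2 by rewrite -[leRHS]mul1r ler_wpM2r.
have abt : (nc a ^+ 2 + nc b ^+ 2) * t ^+ 2 <= t ^+ 2.
  by rewrite -[leRHS]mul1r ler_wpM2r ?sqr_ge0.
lra.
Qed.

Lemma dragomir_ge0 : 0 <= Om.
Proof. by apply: sup_ge0 => _ [ab _ <-]; apply: opnorm_ge0. Qed.

Lemma dragomir_le c : 0 <= c ->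
  (forall a b x, nc a ^+ 2 + nc b ^+ 2 <= 1 -> hn x <= 1 ->
     hn (a *: T x + b *: Ts x) <= c) ->
  Om <= c.
Proof.
move=> c_ge0 comb_le; apply: ge0_ge_sup => // _ [[a b] ab1 <-].
by apply: opnorm_le => // x; apply: comb_le.
Qed.

Lemma opnorm_comb_le_dragomir a b : nc a ^+ 2 + nc b ^+ 2 <= 1 ->
  opnorm ip (fun x => a *: T x + b *: Ts x) <= Om.
Proof.
move=> ab1; apply: ub_le_sup; last by exists (a, b).
exists (Num.sqrt (t ^+ 2 + w2)) => _ [[a' b'] ab1' <-].
apply: opnorm_le => [|x x1]; first exact: sqrtr_ge0.
exact/hnorm_le_sqrt/comb_sqr_le_opnorm_add_numrad.
Qed.

Lemma ip_comb_op_adj a b x :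
  ip (a *: T x + b *: Ts x) x = a * ip (T x) x + b * conjc (ip (T x) x).
Proof.
by rewrite (ipDl hilbertV) !(ipZl hilbertV) [ip (Ts x) x](ip_conj hilbertV) -T_adjoint.
Qed.

Lemma numrad_le_dragomir : numrad ip T <= Num.sqrt 2 / 2 * Om.
Proof.
set s := Num.sqrt 2.
have s_gt0 : 0 < s by rewrite sqrtr_gt0 ltr0n.
have s2 : s ^+ 2 = 2 by rewrite sqr_sqrtr ?ler0n.
have Om_ge0 := dragomir_ge0.
have bound_ge0 : 0 <= s / 2 * Om by rewrite mulr_ge0 ?divr_ge0 ?sqrtr_ge0.
apply: numrad_le => // x x1.
set u := ip (T x) x.
have [->|u_neq0] := eqVneq u 0; first by rewrite Normc.normc0.
set r := nc u.
have r_gt0 : 0 < r.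
  by rewrite lt_def normc_ge0 andbT; apply: contra u_neq0 => /eqP/Normc.eq0_normc ->.
set k := (s * r)^-1.
have kr : k * r = s^-1 by rewrite /k invfM -mulrA mulVf ?mulr1 ?gt_eqF.
have ab1 : nc (k%:C * conjc u) ^+ 2 + nc (k%:C * u) ^+ 2 <= 1.
  rewrite !Normc.normcM normc_conj normc_real.
  rewrite ger0_norm ?invr_ge0 ?mulr_ge0 ?normc_ge0 ?sqrtr_ge0 //.
  by rewrite -/r kr exprVn s2 -div1r -splitr.
have sr_le : s * r <= Om.
  apply: le_trans (opnorm_comb_le_dragomir ab1).
  have -> : s * r = complex.Re (ip (k%:C * conjc u *: T x + k%:C * u *: Ts x) x).
    rewrite ip_comb_op_adj -/u -!mulrA [conjc u * u]mulrC mulcJ_normc -mulrDr -/r /=.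
    rewrite mul0r subr0 -mulr2n -mulr_natl -s2 /k.
    by field; rewrite ?gt_eqF.
  rewrite (le_trans (Re_le_normc _)) // (le_trans (cauchy_schwarz hilbertV _ _)) //.
  have x_ball : hn x <= 1 by rewrite x1.
  rewrite x1 mulr1; apply: hnorm_le_opnorm x_ball => z z1.
  exact/hnorm_le_sqrt/(comb_sqr_le_opnorm_add_numrad ab1 z1).
nra.
Qed.

End AdjointPair.

Theorem theorem3p4 (R : realType) (V : lmodType R[i]) (ip : V -> V -> R[i])
  (T Ts : V -> V) :
  is_hilbert ip -> is_bounded_op ip T -> is_adjoint ip T Ts ->
  numrad ip T <= Num.sqrt 2 / 2 * dragomir ip T Ts /\
  Num.sqrt 2 / 2 * dragomir ip T Ts <=
    Num.sqrt 2 / 2 *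
      Num.min (Num.sqrt (opnorm ip (fun x => T (Ts x) + Ts (T x))))
              (Num.sqrt (opnorm ip T ^+ 2 + numrad ip (fun x => T (T x)))).
Proof.
move=> hilbertV T_bounded T_adjoint; split; first exact: numrad_le_dragomir.
rewrite ler_wpM2l ?divr_ge0 ?sqrtr_ge0 //.
apply: dragomir_le => [|a b x ab1 x1]; first by rewrite le_min !sqrtr_ge0.
rewrite le_min; apply/andP; split; apply: hnorm_le_sqrt.
- exact: comb_sqr_le_opnorm_TTs_TsT.
- exact: comb_sqr_le_opnorm_add_numrad.
Qed.
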